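(* Let $E$ be a group and $B$ a subgroup of finite index $n$, with right transversal $\{t_1,\dots,t_n\}$; for $x\in E$ write $t_{ix}$ for the transversal element with $Bt_ix=Bt_{ix}$. Let $\pi:B\to B/V(B)$ be the natural map, $b\mapsto\bar b$. Fix $y_1,\dots,y_r\in B$ and define $\tau:E\to B/V(B)$ by $$x\tau=\prod_{i=1}^n\big[w(\bar y_1,\dots,\bar y_r),(t_ixt_{ix}^{-1})\pi\big].$$ Then $\tau$ is a well-defined homomorphism which does not depend on the choice of the transversal. Moreover, if $x\in V^*(E)$ then $x\tau=\overline{[w(y_1,\dots,y_r),x^n]}$.
   Context: Commutators: $[a,b]=a^{-1}b^{-1}ab$, $[a_1,\dots,a_n]=[[a_1,\dots,a_{n-1}],a_n]$. Outer commutator words are defined inductively: each variable $x_i$ is one of weight $1$; if $u(x_1,\dots,x_s)$ and $v(x_{s+1},\dots,x_{s+t})$ are outer commutator words in disjoint variables, then $[u,v]$ is one of weight $s+t$. Let $w=w(x_1,\dots,x_r)$ be an outer commutator word and let $\mathcal V$ be the variety defined by the single law $[w(x_1,\dots,x_r),x_{r+1},x_{r+2}]$ (the centre-by-centre-by-$w$ variety). For a group $G$, $V(G)$ is the verbal subgroup generated by all values $[w(g_1,\dots,g_r),g_{r+1},g_{r+2}]$, and the marginal subgroup $V^*(G)$ is the set of $a\in G$ such that replacing any one argument $g_i$ by $g_ia$ does not change the value $[w(g_1,\dots,g_r),g_{r+1},g_{r+2}]$, for all $g_j\in G$. *)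

(* E is an arbitrary (possibly infinite) group, so we use an
   explicit record of group axioms rather than MathComp's finite groups. *)
From Stdlib Require Import List Arith.
Set Implicit Arguments.

Record Grp := {
  carrier :> Type;
  gmul : carrier -> carrier -> carrier;
  ginv : carrier -> carrier;
  gone : carrier;
  gmulA : forall a b c, gmul a (gmul b c) = gmul (gmul a b) c;
  gmul1l : forall a, gmul gone a = a;
  gmul1r : forall a, gmul a gone = a;
  gmulVl : forall a, gmul (ginv a) a = gone;
  gmulVr : forall a, gmul a (ginv a) = gone
}.
Arguments gmul {g}. Arguments ginv {g}. Arguments gone {g}.

Definition comm {G : Grp} (a b : G) : G :=
  gmul (gmul (gmul (ginv a) (ginv b)) a) b.

Fixpoint gpow {G : Grp} (x : G) (n : nat) : G :=
  match n with O => gone | S m => gmul x (gpow x m) end.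

Definition gprod {G : Grp} (n : nat) (f : nat -> G) : G :=
  fold_right (fun i acc => gmul (f i) acc) gone (seq 0 n).

(* Outer commutator words: variables are numbered consecutively left to right;
   a leaf is a single variable, [u,v] uses disjoint consecutive variables. *)
Inductive ocw := OVar | OComm (u v : ocw).

Fixpoint weight (w : ocw) : nat :=
  match w with OVar => 1 | OComm u v => weight u + weight v end.

Fixpoint ocw_eval {G : Grp} (w : ocw) (k : nat) (g : nat -> G) : G :=
  match w with
  | OVar => g k
  | OComm u v => comm (ocw_eval u k g) (ocw_eval v (k + weight u) g)
  end.

Definition wval {G : Grp} (w : ocw) (g : nat -> G) : G := ocw_eval w 0 g.

Definition vlaw {G : Grp} (w : ocw) (g : nat -> G) : G :=
  comm (comm (wval w g) (g (weight w))) (g (S (weight w))).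

Definition is_subgroup {G : Grp} (B : G -> Prop) : Prop :=
  B gone /\ (forall a b, B a -> B b -> B (gmul a b)) /\ (forall a, B a -> B (ginv a)).

Inductive gen_sub {G : Grp} (S : G -> Prop) : G -> Prop :=
  | gen_base : forall a, S a -> gen_sub S a
  | gen_one : gen_sub S gone
  | gen_mul : forall a b, gen_sub S a -> gen_sub S b -> gen_sub S (gmul a b)
  | gen_inv : forall a, gen_sub S a -> gen_sub S (ginv a).

Definition verbal {G : Grp} (w : ocw) (B : G -> Prop) : G -> Prop :=
  gen_sub (fun z => exists g : nat -> G,
             (forall j, j < weight w + 2 -> B (g j)) /\ z = vlaw w g).

Definition upd {G : Grp} (g : nat -> G) (j : nat) (a : G) : nat -> G :=
  fun k => if Nat.eqb k j then gmul (g j) a else g k.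

Definition marginal {G : Grp} (w : ocw) (a : G) : Prop :=
  forall (g : nat -> G) j, j < weight w + 2 -> vlaw w (upd g j a) = vlaw w g.

(* equality of images in B/V(B): b1 V(B) = b2 V(B) *)
Definition congV {G : Grp} (w : ocw) (B : G -> Prop) (b1 b2 : G) : Prop :=
  verbal w B (gmul b1 (ginv b2)).

Definition right_transversal {G : Grp} (B : G -> Prop) (n : nat) (t : nat -> G) : Prop :=
  (forall x, exists i, i < n /\ B (gmul x (ginv (t i)))) /\
  (forall x i j, i < n -> j < n -> B (gmul x (ginv (t i))) -> B (gmul x (ginv (t j))) -> i = j).

(* sigma i x is the index "ix": B t_i x = B t_{ix} *)
Definition coset_action {G : Grp} (B : G -> Prop) (n : nat) (t : nat -> G)
  (sigma : nat -> G -> nat) : Prop :=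
  forall i x, i < n -> sigma i x < n /\ B (gmul (gmul (t i) x) (ginv (t (sigma i x)))).

(* representative in B of x tau = prod_i [w(y), t_i x t_{ix}^-1] *)
Definition tau {G : Grp} (w : ocw) (y : nat -> G) (n : nat) (t : nat -> G)
  (sigma : nat -> G -> nat) (x : G) : G :=
  gprod n (fun i => comm (wval w y) (gmul (gmul (t i) x) (ginv (t (sigma i x))))).

(* Because [[w(y), b], d] lies in V(B), the map b |-> [w(y), b] V(B) is a homomorphism from B
   into the centre of B/V(B).  So the factors of x tau commute modulo V(B), and both the
   homomorphism property and the independence of the transversal reduce to reindexing
   products along the permutations of the cosets induced by E: the coset action composes,
   and two transversals differ by factors in B whose contributions cancel.  If x is marginal, [w(y), x] is central in E and
   [w(y), s x^m s^-1] = [w(y), x]^m, so along each cycle of x on the cosets the factors multiply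
   to [w(y), x]^(length of the cycle); the cycle lengths add up to n. *)

From Stdlib Require Import Arith List Lia Permutation.
Set Implicit Arguments.
Unset Strict Implicit.

Local Infix "·" := gmul (at level 40, left associativity).
Local Notation "x ⁻¹" := (ginv x) (at level 2, format "x ⁻¹").

Section GroupLaws.
Variable G : Grp.
Implicit Types a b c : G.

Lemma mulgA_r a b c : a · b · c = a · (b · c).
Proof. now rewrite gmulA. Qed.

Lemma mulKg a b : a⁻¹ · (a · b) = b.
Proof. now rewrite gmulA, gmulVl, gmul1l. Qed.

Lemma mulKVg a b : a · (a⁻¹ · b) = b.
Proof. now rewrite gmulA, gmulVr, gmul1l. Qed.

Lemma invg_unique a b : a · b = gone -> a⁻¹ = b.
Proof. intro H. now rewrite <- (gmul1r _ a⁻¹), <- H, gmulA, gmulVl, gmul1l. Qed.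

Lemma invgM a b : (a · b)⁻¹ = b⁻¹ · a⁻¹.
Proof. apply invg_unique. now rewrite mulgA_r, mulKVg, gmulVr. Qed.

Lemma invgK a : a⁻¹⁻¹ = a.
Proof. apply invg_unique, gmulVl. Qed.

Lemma invg1 : (@gone G)⁻¹ = gone.
Proof. apply invg_unique, gmul1l. Qed.

End GroupLaws.

Global Hint Rewrite mulgA_r gmul1l gmul1r gmulVl gmulVr mulKg mulKVg invgM invgK invg1 : group.
Ltac gsimpl := unfold comm in *; autorewrite with group in *.
Ltac gsolve := gsimpl; reflexivity.

Section Commutators.
Variable G : Grp.
Implicit Types a b c d s : G.

Lemma commute_of_comm1 a b : comm a b = gone -> a · b = b · a.
Proof.
  intro H. rewrite <- (mulKVg (b · a) (a · b)), <- (gmul1r _ (b · a)), <- H. gsolve.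
Qed.

Lemma comm_mulr a b d : comm a (b · d) = comm a d · (d⁻¹ · comm a b · d).
Proof. gsolve. Qed.

Lemma comm_mull a b d : comm (a · b) d = b⁻¹ · comm a d · b · comm b d.
Proof. gsolve. Qed.

Lemma comm_conjg a b s : comm (s⁻¹ · a · s) (s⁻¹ · b · s) = s⁻¹ · comm a b · s.
Proof. gsolve. Qed.

Lemma gpow_add a m1 m2 : gpow a (m1 + m2) = gpow a m1 · gpow a m2.
Proof. induction m1; simpl; [now rewrite gmul1l | now rewrite IHm1, gmulA]. Qed.

Lemma commute_gpow a b : a · b = b · a -> forall m, a · gpow b m = gpow b m · a.
Proof.
  intros H m. induction m; simpl; [gsolve |].
  now rewrite gmulA, H, <- gmulA, IHm, gmulA.
Qed.

Lemma comm_gpow_central c a : (forall e, comm c a · e = e · comm c a) ->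
  forall m, comm c (gpow a m) = gpow (comm c a) m.
Proof.
  intros Hk m. induction m; simpl; [gsolve |].
  rewrite comm_mulr, IHm, (mulgA_r _ (comm c a)), Hk, mulKg.
  symmetry. now apply commute_gpow.
Qed.

Lemma comm_conjg_central c s a : comm c s · a = a · comm c s ->
  (forall e, comm c a · e = e · comm c a) -> comm c (s · a · s⁻¹) = comm c a.
Proof.
  intros Hq Hk.
  transitivity (s · (comm c s)⁻¹ · (c⁻¹ · a⁻¹ · c · (comm c s · a)) · s⁻¹);
    [unfold comm; gsolve |].
  rewrite Hq.
  replace (c⁻¹ · a⁻¹ · c · (a · comm c s)) with (comm c a · comm c s) by (unfold comm; gsolve).
  rewrite (Hk (comm c s)), (mulgA_r s), mulKg, mulgA_r, Hk. apply mulKVg.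
Qed.

End Commutators.

Section Subgroups.
Variables (G : Grp) (B : G -> Prop).
Hypothesis HB : is_subgroup B.

Lemma subgroup_one : B gone.
Proof. apply HB. Qed.

Lemma subgroup_mul a b : B a -> B b -> B (a · b).
Proof. apply HB. Qed.

Lemma subgroup_inv a : B a -> B a⁻¹.
Proof. apply HB. Qed.

Lemma subgroup_comm a b : B a -> B b -> B (comm a b).
Proof. intros. unfold comm. auto using subgroup_mul, subgroup_inv. Qed.

End Subgroups.

Ltac subgroup_step HB :=
  first [ simple apply (subgroup_comm HB) | simple apply (subgroup_mul HB)
        | simple apply (subgroup_inv HB) | simple apply (subgroup_one HB) ].

Section OuterCommutatorWords.
Variable G : Grp.

Lemma ocw_eval_ext (w : ocw) : forall k (g g' : nat -> G),
  (forall j, k <= j -> j < k + weight w -> g j = g' j) -> ocw_eval w k g = ocw_eval w k g'.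
Proof.
  induction w as [|u IHu v IHv]; intros k g g' H; simpl in *.
  - apply H; lia.
  - rewrite (IHu k g g'), (IHv (k + weight u) g g'); auto; intros; apply H; lia.
Qed.

Lemma ocw_eval_subgroup (B : G -> Prop) (HB : is_subgroup B) (w : ocw) : forall k (g : nat -> G),
  (forall j, k <= j -> j < k + weight w -> B (g j)) -> B (ocw_eval w k g).
Proof.
  induction w as [|u IHu v IHv]; intros k g H; simpl in *.
  - apply H; lia.
  - apply (subgroup_comm HB); [apply IHu | apply IHv]; intros; apply H; lia.
Qed.

Lemma ocw_eval_conjg (s : G) (w : ocw) : forall k (g : nat -> G),
  ocw_eval w k (fun j => s⁻¹ · g j · s) = s⁻¹ · ocw_eval w k g · s.
Proof.
  induction w as [|u IHu v IHv]; intros k g; simpl; auto.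
  rewrite IHu, IHv. apply comm_conjg.
Qed.

Lemma vlaw_eq (w : ocw) (g y : nat -> G) : (forall j, j < weight w -> g j = y j) ->
  vlaw w g = comm (comm (wval w y) (g (weight w))) (g (S (weight w))).
Proof.
  intro H. unfold vlaw, wval. do 2 f_equal. apply ocw_eval_ext. intros j _ Hj. apply H, Hj.
Qed.

Definition law_args (w : ocw) (y : nat -> G) (b d : G) : nat -> G :=
  fun k => if k <? weight w then y k else if k =? weight w then b else d.

Lemma law_args_low w y b d j : j < weight w -> law_args w y b d j = y j.
Proof. intro Hj. unfold law_args. now rewrite (proj2 (Nat.ltb_lt _ _) Hj). Qed.

Lemma law_args_weight w y b d : law_args w y b d (weight w) = b.
Proof. unfold law_args. now rewrite Nat.ltb_irrefl, Nat.eqb_refl. Qed.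

Lemma law_args_weightS w y b d : law_args w y b d (S (weight w)) = d.
Proof.
  unfold law_args.
  rewrite (proj2 (Nat.ltb_ge _ _)), (proj2 (Nat.eqb_neq _ _)); auto; lia.
Qed.

Lemma vlaw_law_args w y b d : vlaw w (law_args w y b d) = comm (comm (wval w y) b) d.
Proof.
  rewrite (vlaw_eq (y := y)) by apply law_args_low.
  now rewrite law_args_weight, law_args_weightS.
Qed.

Lemma upd_same (g : nat -> G) j a : upd g j a j = g j · a.
Proof. unfold upd. now rewrite Nat.eqb_refl. Qed.

Lemma upd_other (g : nat -> G) j a k : k <> j -> upd g j a k = g k.
Proof. intro Hk. unfold upd. now rewrite (proj2 (Nat.eqb_neq _ _) Hk). Qed.

Lemma marginal_comm_l w (x : G) y b d : marginal w x ->
  comm (comm (wval w y) (b · x)) d = comm (comm (wval w y) b) d.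
Proof.
  intro Hx. transitivity (vlaw w (upd (law_args w y b d) (weight w) x)).
  - rewrite (vlaw_eq (y := y)).
    + now rewrite upd_same, upd_other, law_args_weight, law_args_weightS by lia.
    + intros j Hj. rewrite upd_other by lia. now apply law_args_low.
  - rewrite Hx by lia. apply vlaw_law_args.
Qed.

Lemma marginal_comm_r w (x : G) y b d : marginal w x ->
  comm (comm (wval w y) b) (d · x) = comm (comm (wval w y) b) d.
Proof.
  intro Hx. transitivity (vlaw w (upd (law_args w y b d) (S (weight w)) x)).
  - rewrite (vlaw_eq (y := y)).
    + now rewrite upd_same, upd_other, law_args_weight, law_args_weightS by lia.
    + intros j Hj. rewrite upd_other by lia. now apply law_args_low.
  - rewrite Hx by lia. apply vlaw_law_args.
Qed.

End OuterCommutatorWords.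

Section MarginalElements.
Variables (G : Grp) (w : ocw) (y : nat -> G) (x : G).
Hypothesis Hx : marginal w x.
Local Notation c := (wval w y).

Lemma marginal_comm_central e : comm c x · e = e · comm c x.
Proof.
  apply commute_of_comm1.
  rewrite <- (gmul1l _ x), (marginal_comm_l _ _ _ Hx). gsolve.
Qed.

Lemma marginal_comm_commute s : comm c s · x = x · comm c s.
Proof.
  apply commute_of_comm1.
  rewrite <- (gmul1l _ x), (marginal_comm_r _ _ _ Hx). gsolve.
Qed.

Lemma marginal_comm_conjg_gpow s m : comm c (s · gpow x m · s⁻¹) = gpow (comm c x) m.
Proof.
  assert (Hpow := comm_gpow_central marginal_comm_central m).
  rewrite comm_conjg_central, Hpow; auto.
  - now apply commute_gpow, marginal_comm_commute.
  - intro e. rewrite Hpow. symmetry. apply commute_gpow. symmetry. apply marginal_comm_central.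
Qed.

End MarginalElements.

Section VerbalSubgroup.
Variables (G : Grp) (w : ocw) (B : G -> Prop).
Hypothesis HB : is_subgroup B.
Local Infix "≡" := (congV w B) (at level 70).
Local Hint Extern 1 (B _) => subgroup_step HB : core.

Lemma verbal_conjg s z : B s -> verbal w B z -> verbal w B (s⁻¹ · z · s).
Proof.
  intros Hs. induction 1 as [z [g [Hg ->]]| |a b _ IHa _ IHb|a _ IHa].
  - apply gen_base. exists (fun j => s⁻¹ · g j · s). split; auto.
    unfold vlaw, wval. now rewrite ocw_eval_conjg, !comm_conjg.
  - replace (s⁻¹ · gone · s) with (@gone G) by gsolve. apply gen_one.
  - replace (s⁻¹ · (a · b) · s) with (s⁻¹ · a · s · (s⁻¹ · b · s)) by gsolve. now apply gen_mul.
  - replace (s⁻¹ · a⁻¹ · s) with (s⁻¹ · a · s)⁻¹ by gsolve. now apply gen_inv.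
Qed.

Lemma verbal_conjgV s z : B s -> verbal w B z -> verbal w B (s · z · s⁻¹).
Proof. intros Hs Hz. rewrite <- (invgK s) at 1. auto using verbal_conjg. Qed.

Lemma congV_refl a : a ≡ a.
Proof. unfold congV. rewrite gmulVr. apply gen_one. Qed.

Lemma congV_sym a b : a ≡ b -> b ≡ a.
Proof. unfold congV. intro H. apply gen_inv in H. now autorewrite with group in H. Qed.

Lemma congV_trans a b d : a ≡ b -> b ≡ d -> a ≡ d.
Proof.
  unfold congV. intros H1 H2. pose proof (gen_mul H1 H2) as H.
  now autorewrite with group in H.
Qed.

Lemma congV_mul a a' b b' : B a -> a ≡ a' -> b ≡ b' -> a · b ≡ a' · b'.
Proof.
  unfold congV. intros Ha H1 H2.
  pose proof (gen_mul (verbal_conjgV Ha H2) H1) as H. now autorewrite with group in *.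
Qed.

Lemma congV_mul_verbal a z : B a -> verbal w B z -> a · z ≡ a.
Proof.
  unfold congV. intros Ha Hz. pose proof (verbal_conjgV Ha Hz) as H.
  now autorewrite with group in *.
Qed.

Lemma congV_mulIr a b d : a · d ≡ b · d -> a ≡ b.
Proof. unfold congV. now autorewrite with group. Qed.

Definition central_modV (a : G) : Prop := B a /\ forall d, B d -> verbal w B (comm a d).

Lemma central_modV_one : central_modV gone.
Proof.
  split; auto. intros d _. replace (comm gone d) with (@gone G) by gsolve. apply gen_one.
Qed.

Lemma central_modV_mul a b : central_modV a -> central_modV b -> central_modV (a · b).
Proof.
  intros [Ha Ha'] [Hb Hb']. split; auto.
  intros d Hd. rewrite comm_mull. exact (gen_mul (verbal_conjg Hb (Ha' d Hd)) (Hb' d Hd)).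
Qed.

Lemma central_modV_commute a b : central_modV a -> B b -> a · b ≡ b · a.
Proof.
  intros [Ha Ha'] Hb. unfold congV.
  pose proof (gen_inv (verbal_conjgV Ha (Ha' _ (subgroup_inv HB Hb)))) as H.
  gsimpl. exact H.
Qed.

End VerbalSubgroup.

Definition lprod {G : Grp} (l : list nat) (f : nat -> G) : G :=
  fold_right (fun i acc => f i · acc) gone l.

Lemma lprod_cons (G : Grp) i l (f : nat -> G) : lprod (i :: l) f = f i · lprod l f.
Proof. reflexivity. Qed.

Lemma lprod_app (G : Grp) l1 l2 (f : nat -> G) :
  lprod (l1 ++ l2) f = lprod l1 f · lprod l2 f.
Proof.
  induction l1 as [|i l1 IH]; [symmetry; apply gmul1l |].
  cbn [app]. rewrite !lprod_cons, IH. apply gmulA.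
Qed.

Lemma lprod_map (G : Grp) p l (f : nat -> G) : lprod (map p l) f = lprod l (fun i => f (p i)).
Proof. induction l as [|i l IH]; auto. cbn [map]. now rewrite !lprod_cons, IH. Qed.

Lemma lprod_ext (G : Grp) l (f g : nat -> G) :
  (forall i, In i l -> f i = g i) -> lprod l f = lprod l g.
Proof.
  induction l as [|i l IH]; intro H; auto.
  rewrite !lprod_cons, IH by (intros; apply H; simpl; auto).
  f_equal. apply H. simpl; auto.
Qed.

Definition perm_on (n : nat) (p : nat -> nat) : Prop :=
  (forall i, i < n -> p i < n) /\ (forall i j, i < n -> j < n -> p i = p j -> i = j).

Lemma perm_on_map_seq n p : perm_on n p -> Permutation (map p (seq 0 n)) (seq 0 n).
Proof.
  intros [Hr Hi]. apply NoDup_Permutation_bis.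
  - apply NoDup_map_NoDup_ForallPairs; [| apply seq_NoDup].
    intros a b Ha Hb. apply in_seq in Ha, Hb. apply Hi; lia.
  - now rewrite length_map.
  - intros j Hj. apply in_map_iff in Hj. destruct Hj as [i [<- Hi']]. apply in_seq in Hi'.
    apply in_seq. specialize (Hr i). lia.
Qed.

Lemma perm_on_surj n p j : perm_on n p -> j < n -> exists i, i < n /\ p i = j.
Proof.
  intros Hp Hj.
  assert (Hin : In j (map p (seq 0 n))).
  { apply (Permutation_in _ (Permutation_sym (perm_on_map_seq Hp))), in_seq. lia. }
  apply in_map_iff in Hin. destruct Hin as [i [Hi Hin]]. apply in_seq in Hin.
  exists i; split; [lia | exact Hi].
Qed.

Lemma perm_on_fixed n p : perm_on (S n) p -> p n = n -> perm_on n p.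
Proof.
  intros [Hr Hi] Hn. split.
  - intros i Hin. assert (p i <> n) by (intro E; rewrite <- Hn in E; apply Hi in E; lia).
    specialize (Hr i). lia.
  - intros i j Hin Hjn. apply Hi; lia.
Qed.

Lemma perm_on_contract n p j : perm_on (S n) p -> j < n -> p j = n ->
  perm_on n (fun i => if i =? j then p n else p i).
Proof.
  intros [Hr Hi] Hj Hpj. split.
  - intros i Hin. destruct (Nat.eqb_spec i j) as [->|Hij].
    + assert (p n <> n) by (intro E; rewrite <- Hpj in E; apply Hi in E; lia).
      specialize (Hr n). lia.
    + assert (p i <> n) by (intro E; rewrite <- Hpj in E; apply Hi in E; lia).
      specialize (Hr i). lia.
  - intros i k Hin Hkn.
    destruct (Nat.eqb_spec i j) as [->|Hij], (Nat.eqb_spec k j) as [->|Hkj]; intro E; auto;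
      apply Hi in E; lia.
Qed.

Lemma list_sum_absorb l (f : nat -> nat) j a : NoDup l -> In j l ->
  list_sum (map (fun i => if i =? j then f i + a else f i) l) = list_sum (map f l) + a.
Proof.
  induction l as [|i l IH]; intros Hnd Hj; [destruct Hj |]. inversion Hnd; subst. simpl.
  destruct (Nat.eqb_spec i j) as [->|Hij].
  - rewrite (map_ext_in _ f); [lia |].
    intros k Hk. destruct (Nat.eqb_spec k j) as [->|]; [contradiction | reflexivity].
  - destruct Hj as [->|Hj]; [contradiction |]. rewrite IH; auto. lia.
Qed.

Section ProductsModuloV.
Variables (G : Grp) (w : ocw) (B : G -> Prop).
Hypothesis HB : is_subgroup B.
Local Infix "≡" := (congV w B) (at level 70).
Local Hint Extern 1 (B _) => subgroup_step HB : core.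

Lemma lprod_subgroup l (f : nat -> G) : (forall i, In i l -> B (f i)) -> B (lprod l f).
Proof.
  induction l as [|i l IH]; intro H; [apply (subgroup_one HB) |].
  apply (subgroup_mul HB (H i (in_eq i l))), IH. intros k Hk. apply H, in_cons, Hk.
Qed.

Lemma lprod_central_modV l (f : nat -> G) :
  (forall i, In i l -> central_modV w B (f i)) -> central_modV w B (lprod l f).
Proof.
  induction l as [|i l IH]; intro H; [apply (central_modV_one w HB) |].
  apply (central_modV_mul HB (H i (in_eq i l))), IH. intros k Hk. apply H, in_cons, Hk.
Qed.

Lemma lprod_congr l (f g : nat -> G) :
  (forall i, In i l -> B (f i) /\ f i ≡ g i) -> lprod l f ≡ lprod l g.
Proof.
  induction l as [|i l IH]; intro H; [apply congV_refl |].
  destruct (H i (in_eq i l)) as [Hf Hfg].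
  apply (congV_mul HB Hf Hfg), IH. intros k Hk. apply H, in_cons, Hk.
Qed.

Lemma lprod_perm l l' (f : nat -> G) : Permutation l l' ->
  (forall i, In i l -> central_modV w B (f i)) -> lprod l f ≡ lprod l' f.
Proof.
  intro P. induction P as [| i l l' _ IH | i j l | l l' l'' P1 IH1 _ IH2]; intro H.
  - apply congV_refl.
  - apply (congV_mul HB); [apply H, in_eq | apply congV_refl |].
    apply IH. intros k Hk. apply H, in_cons, Hk.
  - destruct (H i (in_cons _ _ _ (in_eq i l))) as [Hi _].
    destruct (H j (in_eq j _)) as [Hj _].
    rewrite !lprod_cons, !gmulA. apply (congV_mul HB); [auto | | apply congV_refl].
    apply (central_modV_commute HB); [apply H, in_eq | exact Hi].
  - apply (congV_trans (IH1 H)), IH2. intros i Hi. apply H.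
    now apply (Permutation_in _ (Permutation_sym P1)).
Qed.

Lemma lprod_split l (f g : nat -> G) : (forall i, In i l -> B (f i) /\ central_modV w B (g i)) ->
  lprod l (fun i => f i · g i) ≡ lprod l f · lprod l g.
Proof.
  induction l as [|i l IH]; intro H; [unfold congV; gsimpl; apply gen_one |].
  destruct (H i (in_eq i l)) as [Hf [Hg Hg']].
  assert (H' : forall k, In k l -> B (f k) /\ central_modV w B (g k)) by (intros k Hk; apply H, in_cons, Hk).
  assert (HF : B (lprod l f)) by (apply lprod_subgroup; intros k Hk; apply H', Hk).
  assert (HG : B (lprod l g)) by (apply lprod_subgroup; intros k Hk; apply H', Hk).
  rewrite !lprod_cons. apply (congV_trans (b := f i · g i · (lprod l f · lprod l g))).
  { apply (congV_mul HB); [auto | apply congV_refl | now apply IH]. }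
  rewrite !mulgA_r. apply (congV_mul HB Hf (congV_refl _ _ _)).
  rewrite !gmulA. apply (congV_mul HB); [auto | | apply congV_refl].
  now apply (central_modV_commute HB).
Qed.

Lemma lprod_absorb l (f : nat -> G) g j : NoDup l -> In j l ->
  (forall i, In i l -> B (f i)) -> central_modV w B g ->
  lprod l f · g ≡ lprod l (fun i => if i =? j then f i · g else f i).
Proof.
  intros Hnd Hj Hf Hg. induction l as [|i l IH]; [destruct Hj |].
  inversion Hnd as [|? ? Hil Hnd']; subst.
  assert (HF : B (lprod l f)) by (apply lprod_subgroup; intros k Hk; apply Hf, in_cons, Hk).
  rewrite !lprod_cons, mulgA_r. destruct (Nat.eqb_spec i j) as [->|Hij].
  - rewrite (lprod_ext (f := fun i => if i =? j then f i · g else f i) (g := f)).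
    + rewrite mulgA_r. apply (congV_mul HB (Hf j (in_eq j l)) (congV_refl _ _ _)).
      apply congV_sym, (central_modV_commute HB Hg HF).
    + intros k Hk. destruct (Nat.eqb_spec k j) as [->|]; [contradiction | reflexivity].
  - destruct Hj as [->|Hj]; [contradiction |].
    apply (congV_mul HB (Hf i (in_eq i l)) (congV_refl _ _ _)).
    apply IH; auto. intros k Hk. apply Hf, in_cons, Hk.
Qed.

Lemma lprod_reindex n p (f : nat -> G) : perm_on n p ->
  (forall i, i < n -> central_modV w B (f i)) ->
  lprod (seq 0 n) (fun i => f (p i)) ≡ lprod (seq 0 n) f.
Proof.
  intros Hp Hf. rewrite <- lprod_map. apply lprod_perm; [now apply perm_on_map_seq |].
  intros j Hj. apply in_map_iff in Hj. destruct Hj as [i [<- Hi]]. apply in_seq in Hi.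
  apply Hf, Hp. lia.
Qed.

End ProductsModuloV.

Lemma lprod_seqS (G : Grp) n (f : nat -> G) : lprod (seq 0 (S n)) f = lprod (seq 0 n) f · f n.
Proof. rewrite seq_S, lprod_app. cbn. now rewrite gmul1r. Qed.

Lemma list_sum_seqS n (e : nat -> nat) :
  list_sum (map e (seq 0 (S n))) = list_sum (map e (seq 0 n)) + e n.
Proof. rewrite seq_S, map_app, list_sum_app. cbn. lia. Qed.

Section CommutatorWithWordValue.
Variables (G : Grp) (w : ocw) (B : G -> Prop) (y : nat -> G).
Hypothesis HB : is_subgroup B.
Hypothesis Hy : forall k, k < weight w -> B (y k).
Local Infix "≡" := (congV w B) (at level 70).
Local Notation c := (wval w y).
Local Hint Extern 1 (B _) => subgroup_step HB : core.

Lemma wval_subgroup : B c.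
Proof. apply (ocw_eval_subgroup HB). intros j _ Hj. apply Hy, Hj. Qed.
Local Hint Resolve wval_subgroup : core.

Lemma verbal_comm_comm b d : B b -> B d -> verbal w B (comm (comm c b) d).
Proof.
  intros Hb Hd. rewrite <- vlaw_law_args. apply gen_base. exists (law_args w y b d). split; auto.
  intros j Hj. destruct (Nat.lt_trichotomy j (weight w)) as [Hlt|[->|Hgt]].
  - rewrite law_args_low; auto.
  - now rewrite law_args_weight.
  - replace j with (S (weight w)) by lia. now rewrite law_args_weightS.
Qed.

Lemma comm_central_modV b : B b -> central_modV w B (comm c b).
Proof. split; auto using verbal_comm_comm. Qed.

Lemma comm_mul_modV b d : B b -> B d -> comm c (b · d) ≡ comm c b · comm c d.
Proof.
  intros Hb Hd. rewrite comm_mulr.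
  replace (d⁻¹ · comm c b · d) with (comm c b · comm (comm c b) d) by gsolve.
  apply (congV_trans (b := comm c d · comm c b)).
  - rewrite gmulA. apply (congV_mul_verbal HB); auto using verbal_comm_comm.
  - apply (central_modV_commute HB); auto using comm_central_modV.
Qed.

Lemma lprod_comm_mul_modV l (f g : nat -> G) : (forall i, In i l -> B (f i) /\ B (g i)) ->
  lprod l (fun i => comm c (f i · g i)) ≡
  lprod l (fun i => comm c (f i)) · lprod l (fun i => comm c (g i)).
Proof.
  intro H. apply (congV_trans (b := lprod l (fun i => comm c (f i) · comm c (g i)))).
  - apply (lprod_congr HB). intros i Hi. destruct (H i Hi). split; auto using comm_mul_modV.
  - apply (lprod_split HB). intros i Hi. destruct (H i Hi). split; auto using comm_central_modV.
Qed.

(* Multiplying by the central factor prod [c, a_i] and reindexing turns the cocycle relation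
   v_i a_(q i) = a_i u_(p i) into an equality of the two products. *)
Lemma lprod_comm_twist n p q (u v a : nat -> G) : perm_on n p -> perm_on n q ->
  (forall i, i < n -> B (u i) /\ B (v i) /\ B (a i)) ->
  (forall i, i < n -> v i · a (q i) = a i · u (p i)) ->
  lprod (seq 0 n) (fun i => comm c (v i)) ≡ lprod (seq 0 n) (fun i => comm c (u i)).
Proof.
  intros Hp Hq Hb Heq.
  assert (Hin : forall i, In i (seq 0 n) -> i < n) by (intros i Hi; apply in_seq in Hi; lia).
  set (A := lprod (seq 0 n) (fun i => comm c (a i))).
  set (U := lprod (seq 0 n) (fun i => comm c (u i))).
  set (V := lprod (seq 0 n) (fun i => comm c (v i))).
  assert (HA : central_modV w B A).
  { apply (lprod_central_modV HB). intros i Hi. apply comm_central_modV, Hb, Hin, Hi. }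
  assert (HU : B U) by (apply (lprod_subgroup HB); intros i Hi; apply (subgroup_comm HB); auto;
                        apply Hb, Hin, Hi).
  assert (HV : B V) by (apply (lprod_subgroup HB); intros i Hi; apply (subgroup_comm HB); auto;
                        apply Hb, Hin, Hi).
  apply congV_mulIr with (d := A).
  apply (congV_trans (b := V · lprod (seq 0 n) (fun i => comm c (a (q i))))).
  { apply (congV_mul HB HV (congV_refl _ _ _)), congV_sym.
    apply (lprod_reindex HB (f := fun i => comm c (a i)) Hq).
    intros i Hi. apply comm_central_modV, Hb, Hi. }
  eapply congV_trans.
  { apply congV_sym, lprod_comm_mul_modV. intros i Hi.
    split; apply Hb; [| apply Hq]; apply Hin, Hi. }
  rewrite (lprod_ext (g := fun i => comm c (a i · u (p i))))
    by (intros i Hi; now rewrite Heq by apply Hin, Hi).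
  eapply congV_trans.
  { apply lprod_comm_mul_modV. intros i Hi. split; apply Hb; [| apply Hp]; apply Hin, Hi. }
  apply (congV_trans (b := A · U)).
  { apply (congV_mul HB (proj1 HA) (congV_refl _ _ _)).
    apply (lprod_reindex HB (f := fun i => comm c (u i)) Hp).
    intros i Hi. apply comm_central_modV, Hb, Hi. }
  now apply (central_modV_commute HB).
Qed.

End CommutatorWithWordValue.

Section MarginalCycles.
Variables (G : Grp) (w : ocw) (B : G -> Prop) (y : nat -> G) (x : G) (s : nat -> G).
Hypothesis HB : is_subgroup B.
Hypothesis Hy : forall k, k < weight w -> B (y k).
Hypothesis Hx : marginal w x.
Local Infix "≡" := (congV w B) (at level 70).
Local Notation c := (wval w y).
Local Hint Extern 1 (B _) => subgroup_step HB : core.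

(* Induction on n: n is cut out of its cycle of p by merging its factor into that of its
   predecessor j, whose exponent becomes e j + e n. *)
Lemma lprod_comm_cycles n : forall p (e : nat -> nat), perm_on n p ->
  (forall i, i < n -> B (s i · gpow x (e i) · (s (p i))⁻¹)) ->
  lprod (seq 0 n) (fun i => comm c (s i · gpow x (e i) · (s (p i))⁻¹))
  ≡ gpow (comm c x) (list_sum (map e (seq 0 n))).
Proof.
  induction n as [|n IH]; intros p e Hp Hu; [apply congV_refl |].
  set (u := fun i => s i · gpow x (e i) · (s (p i))⁻¹) in *.
  assert (Hcu : forall i, i < S n -> central_modV w B (comm c (u i))).
  { intros i Hi. apply (comm_central_modV HB Hy), Hu, Hi. }
  assert (Hlow : forall i, In i (seq 0 n) -> i < S n) by (intros i Hi; apply in_seq in Hi; lia).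
  rewrite lprod_seqS, list_sum_seqS.
  destruct (perm_on_surj Hp (Nat.lt_succ_diag_r n)) as [j [Hj Hpj]].
  destruct (Nat.eq_dec j n) as [->|Hjn].
  - rewrite gpow_add. apply (congV_mul HB).
    + apply (lprod_subgroup HB). intros i Hi. apply Hcu, Hlow, Hi.
    + apply IH; [now apply perm_on_fixed | intros i Hi; apply Hu; lia].
    + unfold u. rewrite Hpj, (marginal_comm_conjg_gpow _ Hx). apply congV_refl.
  - set (p' := fun i => if i =? j then p n else p i).
    set (e' := fun i => if i =? j then e i + e n else e i).
    assert (Hmerge : s j · gpow x (e j + e n) · (s (p n))⁻¹ = u j · u n)
      by (unfold u; rewrite Hpj, gpow_add; gsolve).
    assert (Hj' : In j (seq 0 n)) by (apply in_seq; lia).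
    rewrite <- (list_sum_absorb e (e n) (seq_NoDup n 0) Hj').
    apply (congV_trans (lprod_absorb HB (seq_NoDup n 0) Hj'
      (fun i Hi => proj1 (Hcu i (Hlow i Hi))) (Hcu n (Nat.lt_succ_diag_r n)))).
    apply (congV_trans (b := lprod (seq 0 n) (fun i => comm c (s i · gpow x (e' i) · (s (p' i))⁻¹)))).
    + apply (lprod_congr HB). intros i Hi. unfold p', e'.
      destruct (Nat.eqb_spec i j) as [->|Hij].
      * split; [apply (subgroup_mul HB); apply Hcu; lia |].
        rewrite Hmerge. apply congV_sym, (comm_mul_modV HB Hy); apply Hu; lia.
      * split; [apply Hcu, Hlow, Hi | apply congV_refl].
    + apply IH; [apply perm_on_contract; auto; lia |].
      intros i Hi. unfold p', e'. destruct (Nat.eqb_spec i j) as [->|Hij]; [| apply Hu; lia].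
      rewrite Hmerge. apply (subgroup_mul HB); apply Hu; lia.
Qed.

End MarginalCycles.

Section Transversals.
Variables (G : Grp) (B : G -> Prop) (n : nat) (t : nat -> G) (sigma : nat -> G -> nat).
Hypothesis HB : is_subgroup B.
Hypothesis HT : right_transversal B n t.
Hypothesis HS : coset_action B n t sigma.
Local Hint Extern 1 (B _) => subgroup_step HB : core.

Lemma right_transversal_pos : 0 < n.
Proof. destruct (proj1 HT gone) as [i [Hi _]]. lia. Qed.

Lemma coset_action_lt i x : i < n -> sigma i x < n.
Proof. intro Hi. apply (HS x Hi). Qed.

Lemma coset_action_subgroup i x : i < n -> B (t i · x · (t (sigma i x))⁻¹).
Proof. intro Hi. apply (HS x Hi). Qed.

Lemma coset_action_mul i x1 x2 : i < n -> sigma (sigma i x1) x2 = sigma i (x1 · x2).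
Proof.
  intro Hi. assert (Hi1 := coset_action_lt x1 Hi).
  apply (proj2 HT (t i · (x1 · x2))); auto using coset_action_lt.
  - replace (t i · (x1 · x2) · (t (sigma (sigma i x1) x2))⁻¹)
      with (t i · x1 · (t (sigma i x1))⁻¹ · (t (sigma i x1) · x2 · (t (sigma (sigma i x1) x2))⁻¹))
      by gsolve.
    auto using coset_action_subgroup.
  - now apply coset_action_subgroup.
Qed.

Lemma coset_action_perm x : perm_on n (fun i => sigma i x).
Proof.
  split; [intros; now apply coset_action_lt |].
  intros i j Hi Hj E. apply (proj2 HT (t i)); auto.
  - rewrite gmulVr. auto.
  - replace (t i · (t j)⁻¹)
      with (t i · x · (t (sigma i x))⁻¹ · (t j · x · (t (sigma j x))⁻¹)⁻¹) by (rewrite E; gsolve).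
    auto using coset_action_subgroup.
Qed.

Section ChangeOfTransversal.
Variables (t' : nat -> G) (sigma' : nat -> G -> nat).
Hypothesis HT' : right_transversal B n t'.
Hypothesis HS' : coset_action B n t' sigma'.

(* B t'_j = B t_(pi j); computing pi through the coset action needs no choice. *)
Local Notation pi j := (sigma 0 ((t 0)⁻¹ · t' j)).

Lemma transversal_change_subgroup j : B (t' j · (t (pi j))⁻¹).
Proof.
  assert (H := coset_action_subgroup ((t 0)⁻¹ · t' j) right_transversal_pos).
  autorewrite with group in *. exact H.
Qed.

Lemma transversal_change_perm : perm_on n (fun j => pi j).
Proof.
  split; [intros; apply coset_action_lt, right_transversal_pos |].
  intros i j Hi Hj E. apply (proj2 HT' (t' i)); auto.
  - rewrite gmulVr. auto.
  - replace (t' i · (t' j)⁻¹) with (t' i · (t (pi i))⁻¹ · (t' j · (t (pi j))⁻¹)⁻¹)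
      by (rewrite E; gsolve).
    auto using transversal_change_subgroup.
Qed.

Lemma transversal_change_action i x : i < n -> pi (sigma' i x) = sigma (pi i) x.
Proof.
  intro Hi. assert (Hpi : pi i < n) by now apply transversal_change_perm.
  destruct (HS' x Hi) as [Hsi Hu'].
  apply (proj2 HT (t (pi i) · x)).
  - now apply transversal_change_perm.
  - now apply coset_action_lt.
  - replace (t (pi i) · x · (t (pi (sigma' i x)))⁻¹)
      with ((t' i · (t (pi i))⁻¹)⁻¹ · (t' i · x · (t' (sigma' i x))⁻¹)
            · (t' (sigma' i x) · (t (pi (sigma' i x)))⁻¹)) by gsolve.
    auto using transversal_change_subgroup.
  - now apply coset_action_subgroup.
Qed.

End ChangeOfTransversal.

End Transversals.

Lemma list_sum_seq_one n : list_sum (map (fun _ => 1) (seq 0 n)) = n.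
Proof. induction n as [|n IH]; auto. rewrite list_sum_seqS, IH. lia. Qed.

Section Transfer.
Variables (G : Grp) (w : ocw) (B : G -> Prop) (n : nat) (t : nat -> G)
  (sigma : nat -> G -> nat) (y : nat -> G).
Hypothesis HB : is_subgroup B.
Hypothesis HT : right_transversal B n t.
Hypothesis HS : coset_action B n t sigma.
Hypothesis Hy : forall k, k < weight w -> B (y k).
Local Infix "≡" := (congV w B) (at level 70).
Local Notation c := (wval w y).
Local Hint Extern 1 (B _) => subgroup_step HB : core.
Let word_value_subgroup : B c := wval_subgroup HB Hy.
Local Hint Resolve word_value_subgroup : core.

Lemma tau_lprod (s : nat -> G) (rho : nat -> G -> nat) x :
  tau w y n s rho x = lprod (seq 0 n) (fun i => comm c (s i · x · (s (rho i x))⁻¹)).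
Proof. reflexivity. Qed.

Lemma tau_subgroup (s : nat -> G) (rho : nat -> G -> nat) x :
  coset_action B n s rho -> B (tau w y n s rho x).
Proof.
  intro Hrho. rewrite tau_lprod. apply (lprod_subgroup HB). intros i Hi. apply in_seq in Hi.
  apply (subgroup_comm HB); auto. apply (coset_action_subgroup Hrho). lia.
Qed.

Lemma tau_mul_modV x1 x2 :
  tau w y n t sigma (x1 · x2) ≡ tau w y n t sigma x1 · tau w y n t sigma x2.
Proof.
  rewrite !tau_lprod.
  rewrite (lprod_ext (g := fun i => comm c (t i · x1 · (t (sigma i x1))⁻¹
                          · (t (sigma i x1) · x2 · (t (sigma (sigma i x1) x2))⁻¹)))).
  2: { intros i Hi. apply in_seq in Hi. rewrite (coset_action_mul HB HT HS) by lia. f_equal. gsolve. }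
  eapply congV_trans.
  { apply (lprod_comm_mul_modV HB Hy). intros i Hi. apply in_seq in Hi.
    split; apply (coset_action_subgroup HS); [| apply (coset_action_lt HS)]; lia. }
  apply (congV_mul HB); [| apply congV_refl |].
  - exact (tau_subgroup x1 HS).
  - apply (lprod_reindex HB (f := fun i => comm c (t i · x2 · (t (sigma i x2))⁻¹))
             (coset_action_perm HB HT HS x1)).
    intros i Hi. apply (comm_central_modV HB Hy), (coset_action_subgroup HS), Hi.
Qed.

Lemma tau_transversal_indep (t' : nat -> G) (sigma' : nat -> G -> nat) x :
  right_transversal B n t' -> coset_action B n t' sigma' ->
  tau w y n t sigma x ≡ tau w y n t' sigma' x.
Proof.
  intros HT' HS'. apply congV_sym. rewrite !tau_lprod.
  apply (lprod_comm_twist HB Hy (a := fun j => t' j · (t (sigma 0 ((t 0)⁻¹ · t' j)))⁻¹)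
           (transversal_change_perm HB HT HS HT') (coset_action_perm HB HT' HS' x)).
  - intros i Hi. split; [| split].
    + now apply (coset_action_subgroup HS).
    + now apply (coset_action_subgroup HS').
    + apply (transversal_change_subgroup HT HS).
  - intros i Hi. rewrite (transversal_change_action HB HT HS HT' HS') by exact Hi. gsolve.
Qed.

Lemma tau_marginal x : marginal w x -> tau w y n t sigma x ≡ comm c (gpow x n).
Proof.
  intro Hx. rewrite tau_lprod, (comm_gpow_central (marginal_comm_central _ Hx)).
  rewrite <- (list_sum_seq_one n) at 2.
  rewrite (lprod_ext (g := fun i => comm c (t i · gpow x 1 · (t (sigma i x))⁻¹))).
  2: { intros i _. cbn. now rewrite gmul1r. }
  apply (lprod_comm_cycles HB Hy Hx (coset_action_perm HB HT HS x)).
  intros i Hi. cbn. rewrite gmul1r. now apply (coset_action_subgroup HS).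
Qed.

End Transfer.

Theorem proposition3p4 (w : ocw) (E : Grp) (B : E -> Prop) (n : nat)
  (t : nat -> E) (sigma : nat -> E -> nat) (y : nat -> E) :
  is_subgroup B ->
  right_transversal B n t ->
  coset_action B n t sigma ->
  (forall k, k < weight w -> B (y k)) ->
  (* tau takes values in B (hence in B/V(B)) *)
  (forall x, B (tau w y n t sigma x)) /\
  (* tau is a homomorphism E -> B/V(B) *)
  (forall x1 x2, congV w B (tau w y n t sigma (gmul x1 x2))
                           (gmul (tau w y n t sigma x1) (tau w y n t sigma x2))) /\
  (* independence of the transversal *)
  (forall (t' : nat -> E) (sigma' : nat -> E -> nat),
     right_transversal B n t' -> coset_action B n t' sigma' ->
     forall x, congV w B (tau w y n t sigma x) (tau w y n t' sigma' x)) /\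
  (* value on the marginal subgroup *)
  (forall x, marginal w x ->
     congV w B (tau w y n t sigma x) (comm (wval w y) (gpow x n))).
Proof.
  intros HB HT HS Hy.
  split; [| split; [| split]].
  - intro x. now apply tau_subgroup.
  - apply (tau_mul_modV HB HT HS Hy).
  - intros t' sigma' HT' HS' x. now apply (tau_transversal_indep HB HT HS Hy).
  - intros x Hx. now apply (tau_marginal HB HT HS Hy).
Qed.
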